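(* Let $\alpha_1,\dots,\alpha_6\in\mathbb{C}$ with $2\alpha_1+\alpha_2+\dots+\alpha_6=1$. The rational symplectic transformation $$S_1:(q_1,p_1,q_2,p_2,t,s)\mapsto(X,Y,Z,W,T,S)=\Big(q_1,\,p_1+\frac{q_2p_2-\alpha_1-\alpha_3}{q_1},\,\frac{q_2}{q_1},\,p_2q_1,\,t,\,\frac{s}{t}\Big)$$ transforms the Hamiltonian system with Hamiltonians $H'_1,H'_2$ into the Hamiltonian system (in variables $(X,Y,Z,W)$, times $(T,S)$) with Hamiltonians $H''_1,H''_2$, where $H''_1=H_{VI}(q_1,p_1,t;\alpha_1+\alpha_4+\alpha_6,\alpha_1+\alpha_2,\alpha_3,\alpha_1+\alpha_5,-\alpha_1-\alpha_3)-\frac{\alpha_4}{t(ts-1)}q_1p_1+\frac{\alpha_3(s-1)}{(t-1)(ts-1)}q_2p_2+\frac{s}{ts-1}p_1p_2-\frac{1}{t-1}p_1q_2p_2+\frac{2(s-1)}{(t-1)(ts-1)}q_1p_1q_2p_2-\frac{q_1q_2(q_1p_1+\alpha_3)\{(ts-1)p_2-(t-1)(q_2p_2+\alpha_4)\}}{t(t-1)(ts-1)}$ and $H''_2=\pi(H''_1)$, with $\pi$ the substitution $(q_1,p_1,q_2,p_2,t,s;\alpha_1,\dots,\alpha_6)\mapsto(q_2,p_2,q_1,p_1,s,t;-\alpha_1-\alpha_2-\alpha_3-\alpha_4,\alpha_2,\alpha_4,\alpha_3,1-\alpha_6,1-\alpha_5)$ (the variables of $H''_i$ being renamed $(X,Y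,Z,W,T,S)\to(q_1,p_1,q_2,p_2,t,s)$).
   Context: $H_{VI}(q,p,t;a_0,a_1,a_2,a_3,a_4)=\frac{1}{t(t-1)}\big[p^2(q-t)(q-1)q-\{(a_0-1)(q-1)q+a_3(q-t)q+a_4(q-t)(q-1)\}p+a_2(a_1+a_2)(q-t)\big]$. A Hamiltonian system with Hamiltonians $K_1,K_2$ means $dq_j=\frac{\partial K_1}{\partial p_j}dt+\frac{\partial K_2}{\partial p_j}ds$, $dp_j=-\frac{\partial K_1}{\partial q_j}dt-\frac{\partial K_2}{\partial q_j}ds$ ($j=1,2$). $H'_1=H_{VI}(q_1,p_1,t;\alpha_1+\alpha_4+\alpha_6,-\alpha_1-\alpha_2,\alpha_2,\alpha_1+\alpha_5,\alpha_1+\alpha_3)+\alpha_2\Big\{\frac{(s-1)q_2}{(t-1)(t-s)}-\frac{sq_1}{t(t-s)}+\frac{q_1q_2}{t(t-1)}\Big\}p_2+\alpha_4\frac{(q_1-q_2)p_1}{t-s}+\Big\{\frac{2(s-1)q_1q_2}{(t-1)(t-s)}-\frac{tq_2^2+sq_1^2}{t(t-s)}+\frac{(q_1^2+t)q_2}{t(t-1)}\Big\}p_1p_2$, and $H'_2$ obtained from $H'_1$ by $q_1\leftrightarrow q_2$, $p_1\leftrightarrow p_2$, $t\leftrightarrow s$, $\alpha_2\leftrightarrow\alpha_4$. *)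

(* The complex numbers are R[i] for an
   arbitrary realType R (mathcomp-real-closed's complex), viewed as a normed
   module over itself via R[i]^o. *)
From HB Require Import structures.
From mathcomp Require Import all_boot all_order all_algebra.
From mathcomp Require Import all_classical all_reals all_analysis.
From mathcomp Require Import complex.
Import Order.TTheory GRing.Theory Num.Theory.

Set Implicit Arguments.
Unset Strict Implicit.
Unset Printing Implicit Defensive.

Local Open Scope ring_scope.
Local Open Scope classical_set_scope.

Section Painleve.
Variable R : realType.
Local Notation C := (R[i]).

(* Hamiltonians are functions of (q1, p1, q2, p2, t, s) *)
Definition ham := C -> C -> C -> C -> C -> C -> C.

Definition HVI (q p t a0 a1 a2 a3 a4 : C) : C :=
  (p ^+ 2 * (q - t) * (q - 1) * q
   - ((a0 - 1) * (q - 1) * q + a3 * (q - t) * q + a4 * (q - t) * (q - 1)) * p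
   + a2 * (a1 + a2) * (q - t)) / (t * (t - 1)).

Definition H1' (a1 a2 a3 a4 a5 a6 : C) : ham := fun q1 p1 q2 p2 t s =>
  HVI q1 p1 t (a1 + a4 + a6) (- a1 - a2) a2 (a1 + a5) (a1 + a3)
  + a2 * ((s - 1) * q2 / ((t - 1) * (t - s)) - s * q1 / (t * (t - s))
          + q1 * q2 / (t * (t - 1))) * p2
  + a4 * ((q1 - q2) * p1 / (t - s))
  + (2 * (s - 1) * q1 * q2 / ((t - 1) * (t - s))
     - (t * q2 ^+ 2 + s * q1 ^+ 2) / (t * (t - s))
     + (q1 ^+ 2 + t) * q2 / (t * (t - 1))) * p1 * p2.

Definition H2' (a1 a2 a3 a4 a5 a6 : C) : ham := fun q1 p1 q2 p2 t s =>
  H1' a1 a4 a3 a2 a5 a6 q2 p2 q1 p1 s t.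

Definition H1'' (a1 a2 a3 a4 a5 a6 : C) : ham := fun q1 p1 q2 p2 t s =>
  HVI q1 p1 t (a1 + a4 + a6) (a1 + a2) a3 (a1 + a5) (- a1 - a3)
  - a4 / (t * (t * s - 1)) * q1 * p1
  + a3 * (s - 1) / ((t - 1) * (t * s - 1)) * q2 * p2
  + s / (t * s - 1) * p1 * p2
  - 1 / (t - 1) * p1 * q2 * p2
  + 2 * (s - 1) / ((t - 1) * (t * s - 1)) * q1 * p1 * q2 * p2
  - q1 * q2 * (q1 * p1 + a3) * ((t * s - 1) * p2 - (t - 1) * (q2 * p2 + a4))
    / (t * (t - 1) * (t * s - 1)).

Definition H2'' (a1 a2 a3 a4 a5 a6 : C) : ham := fun q1 p1 q2 p2 t s =>
  H1'' (- a1 - a2 - a3 - a4) a2 a4 a3 (1 - a6) (1 - a5) q2 p2 q1 p1 s t.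

Definition dq1 (K : ham) q1 p1 q2 p2 t s : C :=
  derive1 (fun x : C => (K x p1 q2 p2 t s : C^o)) q1.
Definition dp1 (K : ham) q1 p1 q2 p2 t s : C :=
  derive1 (fun x : C => (K q1 x q2 p2 t s : C^o)) p1.
Definition dq2 (K : ham) q1 p1 q2 p2 t s : C :=
  derive1 (fun x : C => (K q1 p1 x p2 t s : C^o)) q2.
Definition dp2 (K : ham) q1 p1 q2 p2 t s : C :=
  derive1 (fun x : C => (K q1 p1 q2 x t s : C^o)) p2.

Definition e_t : C^o * C^o := (1, 0).
Definition e_s : C^o * C^o := (0, 1).

Definition ham_solution (K1 K2 : ham) (U : set (C^o * C^o))
    (q1 p1 q2 p2 : C^o * C^o -> C^o) : Prop :=
  open U /\
  forall x, U x ->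
    let: (t, s) := x in
    let v := (q1 x, p1 x, q2 x, p2 x) in
    let: (Q1, P1, Q2, P2) := v in
    [/\ [/\ differentiable q1 x, differentiable p1 x,
            differentiable q2 x & differentiable p2 x],
        [/\ 'D_e_t q1 x = dp1 K1 Q1 P1 Q2 P2 t s,
            'D_e_t p1 x = - dq1 K1 Q1 P1 Q2 P2 t s,
            'D_e_t q2 x = dp2 K1 Q1 P1 Q2 P2 t s &
            'D_e_t p2 x = - dq2 K1 Q1 P1 Q2 P2 t s] &
        [/\ 'D_e_s q1 x = dp1 K2 Q1 P1 Q2 P2 t s,
            'D_e_s p1 x = - dq1 K2 Q1 P1 Q2 P2 t s,
            'D_e_s q2 x = dp2 K2 Q1 P1 Q2 P2 t s &
            'D_e_s p2 x = - dq2 K2 Q1 P1 Q2 P2 t s]].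

End Painleve.

From HB Require Import structures.
From mathcomp Require Import all_boot all_order all_algebra.
From mathcomp Require Import all_classical all_reals all_analysis.
From mathcomp Require Import complex ring.
Import Order.TTheory GRing.Theory Num.Theory.
Import numFieldNormedType.Exports.
Local Open Scope ring_scope.
Local Open Scope classical_set_scope.

(* Write (t, s) = (T, S T).  Along a solution the chain rule gives
   d/dT = d/dt + S d/ds and d/dS = T d/ds, so the T- and S-derivatives of
   (X, Y, Z, W) = S1 (q1, p1, q2, p2) are the images under the Jacobian of S1
   of the Hamiltonian vector fields of H'1 + S H'2 and of T H'2.  That these
   images are the Hamiltonian vector fields of H''1 and H''2 at S1 (q, p) is an
   identity between rational functions once a6 is eliminated through
   2 a1 + a2 + ... + a6 = 1; it is checked by computing the partial derivatives
   and clearing denominators. *)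

(* A copy of [is_derive] that is not a type class: [apply:] then leaves the
   premises of the differentiation rules below to us instead of starting an
   instance search on them, which is very slow on large expressions. *)
Definition has_derive {K : numFieldType} {V W : normedModType K}
  (x v : V) (f : V -> W) (df : W) : Prop := is_derive x v f df.

Lemma scale_regular {K : numFieldType} (a b : K) : a *: (b : K^o) = a * b.
Proof. by []. Qed.

Section DifferentiationRules.
Context {K : numFieldType} {V : normedModType K}.
Implicit Types (f g : V -> K^o) (x v : V) (df dg : K).

Lemma has_derive_val {f x v df} : has_derive x v f df -> 'D_v f x = df.
Proof. exact: @derive_val. Qed.

Lemma has_derive_differentiable {f x} v :
  differentiable f x -> has_derive x v f ('D_v f x).
Proof. by move=> fx; apply: DeriveDef => //; exact: diff_derivable. Qed.

Lemma has_derive_eq {f x v} df' {df} : has_derive x v f df -> df = df' ->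
  has_derive x v f df'.
Proof. by move=> fdf <-. Qed.

Lemma has_derive_const (a : K^o) x v : has_derive x v (fun _ => a) 0.
Proof. exact: is_derive_cst. Qed.

Lemma has_derive_add {f g x v df dg} : has_derive x v f df ->
  has_derive x v g dg -> has_derive x v (fun y => f y + g y) (df + dg).
Proof. exact: is_deriveD. Qed.

Lemma has_derive_sub {f g x v df dg} : has_derive x v f df ->
  has_derive x v g dg -> has_derive x v (fun y => f y - g y) (df - dg).
Proof. exact: is_deriveB. Qed.

Lemma has_derive_opp {f x v df} : has_derive x v f df ->
  has_derive x v (fun y => - f y) (- df).
Proof. exact: is_deriveN. Qed.

Lemma has_derive_mul {f g x v df dg} : has_derive x v f df ->
  has_derive x v g dg -> has_derive x v (fun y => f y * g y) (f x * dg + g x * df).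
Proof. exact: is_deriveM. Qed.

Lemma has_derive_sqr {f x v df} : has_derive x v f df ->
  has_derive x v (fun y => f y ^+ 2) (2 * f x * df).
Proof.
move=> fdf; have := has_derive_mul fdf fdf.
under eq_fun do rewrite -expr2.
by move/has_derive_eq; apply; rewrite mulr_natl mulr2n mulrDl.
Qed.

Lemma has_derive_inv {f x v df} : f x != 0 -> has_derive x v f df ->
  has_derive x v (fun y => (f y)^-1) (- (f x ^+ 2)^-1 * df).
Proof.
move=> fx0 fdf; have fxv : derivable f x v := @ex_derive _ _ _ _ _ _ _ fdf.
apply: DeriveDef; first exact: derivableV.
by rewrite deriveV // (has_derive_val fdf).
Qed.

End DifferentiationRules.

Lemma has_derive_var {K : numFieldType} (x v : K) :
  has_derive x v (fun y : K => (y : K^o)) v.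
Proof. exact: is_derive_id. Qed.

Lemma has_derive1_val {K : numFieldType} (f : K -> K^o) (x df : K) :
  has_derive x 1 f df -> f^`() x = df.
Proof. by move=> fdf; rewrite derive1E (has_derive_val fdf). Qed.

Ltac has_derive_rational := repeat first
  [ eassumption | apply: has_derive_const | apply: has_derive_var
  | apply: has_derive_add | apply: has_derive_sub | apply: has_derive_opp
  | apply: has_derive_mul | apply: has_derive_sqr | apply: has_derive_inv ].

Section Derive4.
Context {K : numFieldType} {V : normedModType K}.

Lemma derive_dir_linear (f : V -> K^o) x u w (c : K) : differentiable f x ->
  'D_(u + c *: w) f x = 'D_u f x + c * 'D_w f x.
Proof. by move=> fx; rewrite !deriveE // linearD linearZ. Qed.

Lemma derive_dirZ (f : V -> K^o) x w (c : K) : differentiable f x ->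
  'D_(c *: w) f x = c * 'D_w f x.
Proof. by move=> fx; rewrite !deriveE // linearZ. Qed.

Definition derive4 (f1 f2 f3 f4 : V -> K^o) (x v : V) : K^o * K^o * K^o * K^o :=
  ('D_v f1 x, 'D_v f2 x, 'D_v f3 x, 'D_v f4 x).

Lemma derive4_dir_linear {f1 f2 f3 f4 : V -> K^o} {x} u w (c : K) :
  differentiable f1 x -> differentiable f2 x -> differentiable f3 x ->
  differentiable f4 x ->
  derive4 f1 f2 f3 f4 x (u + c *: w)
  = derive4 f1 f2 f3 f4 x u + c *: derive4 f1 f2 f3 f4 x w.
Proof. by move=> *; rewrite /derive4 !derive_dir_linear. Qed.

Lemma derive4_dirZ {f1 f2 f3 f4 : V -> K^o} {x} w (c : K) :
  differentiable f1 x -> differentiable f2 x -> differentiable f3 x ->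
  differentiable f4 x ->
  derive4 f1 f2 f3 f4 x (c *: w) = c *: derive4 f1 f2 f3 f4 x w.
Proof. by move=> *; rewrite /derive4 !derive_dirZ. Qed.

End Derive4.

Section TimeChange.
Context {K : numFieldType}.
Local Notation K2 := (K^o * K^o)%type.

Lemma derive_reparam {V W : normedModType K} (G g : V -> W) y x v w :
  (forall h : K, G (h *: v + y) = g (h *: w + x)) -> 'D_v G y = 'D_w g x.
Proof.
move=> Gg; have := Gg 0; rewrite !scale0r !add0r => Gyx.
rewrite /derive /=.
suff -> : (fun h : K => h^-1 *: ((G \o shift y) (h *: v) - G y))
        = (fun h : K => h^-1 *: ((g \o shift x) (h *: w) - g x)) by [].
by apply: funext => h /=; rewrite Gg Gyx.
Qed.

Definition time_change (y : K2) : K2 := (y.1, y.2 * y.1).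

Lemma image_time_change_inv (U : set K2) : (forall y, U y -> y.1 != 0) ->
  (fun y : K2 => (y.1, y.2 / y.1)) @` U = time_change @^-1` U.
Proof.
move=> U_neq0; apply/seteqP; split => [_ [[T S] UTS <-]|[T S] UT].
  by rewrite /time_change /= divfK //; exact: U_neq0 UTS.
have /= T_neq0 := U_neq0 _ UT.
by exists (time_change (T, S)) => //; rewrite /time_change /= mulfK.
Qed.

Lemma differentiable_time_change (y : K2) : differentiable time_change y.
Proof.
have dfst : differentiable (@fst K^o K^o) y.
  by apply: linear_differentiable => -[a b]; exact: cvg_fst.
have dsnd : differentiable (@snd K^o K^o) y.
  by apply: linear_differentiable => -[a b]; exact: cvg_snd.
exact/differentiable_pair/differentiableM.
Qed.

Lemma derive4_time_change_t (f1 f2 f3 f4 : K2 -> K^o) (T S : K) :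
  derive4 (f1 \o time_change) (f2 \o time_change) (f3 \o time_change)
    (f4 \o time_change) (T, S) (1, 0)
  = derive4 f1 f2 f3 f4 (T, S * T) ((1, 0) + S *: (0, 1)).
Proof.
have shift_t (f : K2 -> K^o) : 'D_((1, 0) : K2) (f \o time_change) (T, S)
    = 'D_((1, 0) + S *: (0, 1) : K2) f (T, S * T).
  apply: derive_reparam => h; rewrite /time_change /=; congr f.
  by congr pair; rewrite /= !scale_regular; ring.
by rewrite /derive4 !shift_t.
Qed.

Lemma derive4_time_change_s (f1 f2 f3 f4 : K2 -> K^o) (T S : K) :
  derive4 (f1 \o time_change) (f2 \o time_change) (f3 \o time_change)
    (f4 \o time_change) (T, S) (0, 1)
  = derive4 f1 f2 f3 f4 (T, S * T) (T *: (0, 1)).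
Proof.
have shift_s (f : K2 -> K^o) :
    'D_((0, 1) : K2) (f \o time_change) (T, S) = 'D_(T *: (0, 1) : K2) f (T, S * T).
  apply: derive_reparam => h; rewrite /time_change /=; congr f.
  by congr pair; rewrite /= !scale_regular; ring.
by rewrite /derive4 !shift_s.
Qed.

End TimeChange.

Section SymplecticMap.
Variables (K : fieldType) (a1 a3 : K).

Definition S1 (z : K * K * K * K) : K * K * K * K :=
  let: (Q1, P1, Q2, P2) := z in
  (Q1, P1 + (Q2 * P2 - a1 - a3) / Q1, Q2 / Q1, P2 * Q1).

Definition S1_tangent (z dz : K * K * K * K) : K * K * K * K :=
  let: (Q1, P1, Q2, P2) := z in
  let: (dQ1, dP1, dQ2, dP2) := dz in
  (dQ1, dP1 + ((dQ2 * P2 + Q2 * dP2) * Q1 - (Q2 * P2 - a1 - a3) * dQ1) / Q1 ^+ 2,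
   (dQ2 * Q1 - Q2 * dQ1) / Q1 ^+ 2, dP2 * Q1 + P2 * dQ1).

End SymplecticMap.
Arguments S1 {K}.
Arguments S1_tangent {K}.

Section DeriveS1.
Context {K : numFieldType} {V : normedModType K}.
Variables a1 a3 : K.
Context {q1 p1 q2 p2 : V -> K^o} {x : V}.
Hypotheses (q1_diff : differentiable q1 x) (p1_diff : differentiable p1 x).
Hypotheses (q2_diff : differentiable q2 x) (p2_diff : differentiable p2 x).
Hypothesis q1x_neq0 : q1 x != 0.

Let Y y : K^o := p1 y + (q2 y * p2 y - a1 - a3) / q1 y.
Let Z y : K^o := q2 y / q1 y.
Let W y : K^o := p2 y * q1 y.

Lemma differentiable_S1 :
  [/\ differentiable Y x, differentiable Z x & differentiable W x].
Proof.
have q1V := differentiableV q1_diff q1x_neq0.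
split; rewrite /Y /Z /W; repeat first [ assumption | apply: differentiable_cst
  | apply: differentiableD | apply: differentiableB | apply: differentiableM ].
Qed.

Lemma derive4_S1 v :
  derive4 q1 Y Z W x v
  = S1_tangent a1 a3 (q1 x, p1 x, q2 x, p2 x) (derive4 q1 p1 q2 p2 x v).
Proof.
have q1_der := has_derive_differentiable v q1_diff.
have p1_der := has_derive_differentiable v p1_diff.
have q2_der := has_derive_differentiable v q2_diff.
have p2_der := has_derive_differentiable v p2_diff.
rewrite /derive4 /S1_tangent; congr (_, _, _, _); apply: has_derive_val;
  (apply: has_derive_eq; first by has_derive_rational); by rewrite /=; field.
Qed.

End DeriveS1.

Section TransformedFlows.
Context {R : realType}.
Local Notation C := R[i].
Local Notation C4 := (C^o * C^o * C^o * C^o)%type.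

Definition ham_field (H : ham R) (z : C4) (t s : C) : C4 :=
  let: (Q1, P1, Q2, P2) := z in
  (dp1 H Q1 P1 Q2 P2 t s, - dq1 H Q1 P1 Q2 P2 t s,
   dp2 H Q1 P1 Q2 P2 t s, - dq2 H Q1 P1 Q2 P2 t s).

Variables (a1 a2 a3 a4 a5 a6 : C) (Q1 P1 Q2 P2 T S : C).
Hypothesis alpha_sum : 2 * a1 + a2 + a3 + a4 + a5 + a6 = 1.
Hypotheses (T_neq0 : T != 0) (T_neq1 : T != 1).
Hypotheses (ST_neq0 : S * T != 0) (ST_neq1 : S * T != 1) (T_neqST : T != S * T).
Hypothesis Q1_neq0 : Q1 != 0.

Let a6E : a6 = 1 - (2 * a1 + a2 + a3 + a4 + a5).
Proof. by apply/eqP; rewrite eq_sym subr_eq addrC alpha_sum. Qed.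

Let S_neq0 : S != 0. Proof. by apply: contraNneq ST_neq0 => ->; rewrite mul0r. Qed.
Let S_sub1_neq0 : S - 1 != 0.
Proof. by apply: contraNneq T_neqST => /subr0_eq ->; rewrite mul1r. Qed.
Let T_sub1_neq0 : T - 1 != 0. Proof. by rewrite subr_eq0. Qed.
Let ST_sub1_neq0 : S * T - 1 != 0. Proof. by rewrite subr_eq0. Qed.
Let TS_sub1_neq0 : T * S - 1 != 0. Proof. by rewrite mulrC subr_eq0. Qed.
Let T_subST_neq0 : T - S * T != 0. Proof. by rewrite subr_eq0. Qed.
Let ST_subT_neq0 : S * T - T != 0. Proof. by rewrite subr_eq0 eq_sym. Qed.

Ltac partials :=
  rewrite a6E /S1_tangent /ham_field /S1 /dp1 /dq1 /dp2 /dq2 /H1'' /H2'' /H1' /H2' /HVI;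
  repeat (erewrite has_derive1_val; last by has_derive_rational);
  rewrite /= !scale_regular.

Ltac denominators := rewrite ?Q1_neq0 ?T_neq0 ?S_neq0 ?S_sub1_neq0
  ?T_sub1_neq0 ?ST_sub1_neq0 ?TS_sub1_neq0 ?T_subST_neq0 ?ST_subT_neq0.

Lemma S1_maps_t_field :
  S1_tangent a1 a3 (Q1, P1, Q2, P2)
    (ham_field (H1' a1 a2 a3 a4 a5 a6) (Q1, P1, Q2, P2) T (S * T)
     + S *: ham_field (H2' a1 a2 a3 a4 a5 a6) (Q1, P1, Q2, P2) T (S * T))
  = ham_field (H1'' a1 a2 a3 a4 a5 a6) (S1 a1 a3 (Q1, P1, Q2, P2)) T S.
Proof. by partials; congr (_, _, _, _); field; denominators. Qed.

Lemma S1_maps_s_field :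
  S1_tangent a1 a3 (Q1, P1, Q2, P2)
    (T *: ham_field (H2' a1 a2 a3 a4 a5 a6) (Q1, P1, Q2, P2) T (S * T))
  = ham_field (H2'' a1 a2 a3 a4 a5 a6) (S1 a1 a3 (Q1, P1, Q2, P2)) T S.
Proof. by partials; congr (_, _, _, _); field; denominators. Qed.

End TransformedFlows.

Section TimeChangedSolution.
Context {R : realType}.
Local Notation C := R[i].
Context {a1 a2 a3 a4 a5 a6 : C} {q1 p1 q2 p2 : C^o * C^o -> C^o} {T S : C}.
Let y : C^o * C^o := (T, S).
Let x : C^o * C^o := (T, S * T).
Let qx : C^o * C^o * C^o * C^o := (q1 x, p1 x, q2 x, p2 x).

Hypothesis alpha_sum : 2 * a1 + a2 + a3 + a4 + a5 + a6 = 1.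
Hypothesis x_regular : [/\ T != 0, T != 1, S * T != 0, S * T != 1 & T != S * T].
Hypothesis q_diff : [/\ differentiable q1 x, differentiable p1 x,
  differentiable q2 x & differentiable p2 x].
Hypothesis q1x_neq0 : q1 x != 0.
Hypothesis field_t :
  derive4 q1 p1 q2 p2 x (e_t R) = ham_field (H1' a1 a2 a3 a4 a5 a6) qx T (S * T).
Hypothesis field_s :
  derive4 q1 p1 q2 p2 x (e_s R) = ham_field (H2' a1 a2 a3 a4 a5 a6) qx T (S * T).

Let Y z : C^o := p1 z + (q2 z * p2 z - a1 - a3) / q1 z.
Let Z z : C^o := q2 z / q1 z.
Let W z : C^o := p2 z * q1 z.

Lemma differentiable_S1_time_change :
  [/\ differentiable (q1 \o time_change) y,
      differentiable (Y \o time_change) y,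
      differentiable (Z \o time_change) y
    & differentiable (W \o time_change) y].
Proof.
have [q1_diff p1_diff q2_diff p2_diff] := q_diff.
have [Y_diff Z_diff W_diff] :=
  differentiable_S1 a1 a3 q1_diff p1_diff q2_diff p2_diff q1x_neq0.
by split; apply: differentiable_comp (differentiable_time_change _) _.
Qed.

Lemma derive4_S1_time_change_t :
  derive4 (q1 \o time_change) (Y \o time_change) (Z \o time_change)
    (W \o time_change) y (e_t R)
  = ham_field (H1'' a1 a2 a3 a4 a5 a6) (S1 a1 a3 qx) T S.
Proof.
have [q1_diff p1_diff q2_diff p2_diff] := q_diff.
have [T_neq0 T_neq1 ST_neq0 ST_neq1 T_neqST] := x_regular.
have -> : derive4 (q1 \o time_change) (Y \o time_change) (Z \o time_change)
    (W \o time_change) y (e_t R)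
    = derive4 q1 Y Z W x (e_t R + S *: e_s R).
  exact: derive4_time_change_t.
rewrite (derive4_S1 a1 a3 q1_diff p1_diff q2_diff p2_diff q1x_neq0).
rewrite (derive4_dir_linear _ _ _ q1_diff p1_diff q2_diff p2_diff).
by rewrite field_t field_s; apply: S1_maps_t_field.
Qed.

Lemma derive4_S1_time_change_s :
  derive4 (q1 \o time_change) (Y \o time_change) (Z \o time_change)
    (W \o time_change) y (e_s R)
  = ham_field (H2'' a1 a2 a3 a4 a5 a6) (S1 a1 a3 qx) T S.
Proof.
have [q1_diff p1_diff q2_diff p2_diff] := q_diff.
have [T_neq0 T_neq1 ST_neq0 ST_neq1 T_neqST] := x_regular.
have -> : derive4 (q1 \o time_change) (Y \o time_change) (Z \o time_change)
    (W \o time_change) y (e_s R)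
    = derive4 q1 Y Z W x (T *: e_s R).
  exact: derive4_time_change_s.
rewrite (derive4_S1 a1 a3 q1_diff p1_diff q2_diff p2_diff q1x_neq0).
rewrite (derive4_dirZ _ _ q1_diff p1_diff q2_diff p2_diff).
by rewrite field_s; apply: S1_maps_s_field.
Qed.

End TimeChangedSolution.

Theorem mainTheorem6 (R : realType) (a1 a2 a3 a4 a5 a6 : R[i])
  (U : set (R[i]^o * R[i]^o)) (q1 p1 q2 p2 : R[i]^o * R[i]^o -> R[i]^o) :
  2 * a1 + a2 + a3 + a4 + a5 + a6 = 1 ->
  (forall x, U x -> [/\ x.1 != 0, x.1 != 1, x.2 != 0, x.2 != 1 & x.1 != x.2]) ->
  (forall x, U x -> q1 x != 0) ->
  ham_solution (H1' a1 a2 a3 a4 a5 a6) (H2' a1 a2 a3 a4 a5 a6) U q1 p1 q2 p2 ->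
  let V := (fun x : R[i]^o * R[i]^o => (x.1, x.2 / x.1)) @` U in
  let orig (y : R[i]^o * R[i]^o) : R[i]^o * R[i]^o := (y.1, y.2 * y.1) in
  let X := fun y => q1 (orig y) in
  let Y := fun y => p1 (orig y) + (q2 (orig y) * p2 (orig y) - a1 - a3) / q1 (orig y) in
  let Z := fun y => q2 (orig y) / q1 (orig y) in
  let W := fun y => p2 (orig y) * q1 (orig y) in
  ham_solution (H1'' a1 a2 a3 a4 a5 a6) (H2'' a1 a2 a3 a4 a5 a6) V X Y Z W.
Proof.
move=> alpha_sum U_regular q1_neq0 [U_open U_sol] V orig X Y Z W.
have VE : V = time_change @^-1` U.
  by apply: image_time_change_inv => y /U_regular[].
split.
  rewrite VE; apply: open_comp => // y _.
  exact/differentiable_continuous/differentiable_time_change.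
case=> T S; rewrite VE /time_change /= => Ux.
have [q_diff sol_t sol_s] := U_sol _ Ux.
pose qx : R[i]^o * R[i]^o * R[i]^o * R[i]^o :=
  (q1 (T, S * T), p1 (T, S * T), q2 (T, S * T), p2 (T, S * T)).
(* [reflexivity] rather than [done], which would first try to unify the goal
   with the equations in the context and unfold the derivatives in them. *)
have field_t :
    derive4 q1 p1 q2 p2 (T, S * T) (e_t R) = ham_field (H1' a1 a2 a3 a4 a5 a6) qx T (S * T).
  by rewrite /derive4 /ham_field /=; case: sol_t => -> -> -> ->; reflexivity.
have field_s :
    derive4 q1 p1 q2 p2 (T, S * T) (e_s R) = ham_field (H2' a1 a2 a3 a4 a5 a6) qx T (S * T).
  by rewrite /derive4 /ham_field /=; case: sol_s => -> -> -> ->; reflexivity.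
have [X_diff Y_diff Z_diff W_diff] : [/\ differentiable X (T, S),
    differentiable Y (T, S), differentiable Z (T, S) & differentiable W (T, S)].
  exact: (differentiable_S1_time_change q_diff (q1_neq0 _ Ux)).
have Dt : derive4 X Y Z W (T, S) (e_t R)
    = ham_field (H1'' a1 a2 a3 a4 a5 a6) (S1 a1 a3 qx) T S.
  exact: (derive4_S1_time_change_t alpha_sum (U_regular _ Ux) q_diff
    (q1_neq0 _ Ux) field_t field_s).
have Ds : derive4 X Y Z W (T, S) (e_s R)
    = ham_field (H2'' a1 a2 a3 a4 a5 a6) (S1 a1 a3 qx) T S.
  exact: (derive4_S1_time_change_s alpha_sum (U_regular _ Ux) q_diff
    (q1_neq0 _ Ux) field_s).
move: Dt Ds; rewrite /derive4 /ham_field /S1 /= => -[-> -> -> ->] [-> -> -> ->].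
by split; split; first [reflexivity | assumption].
Qed.
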